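(* Let $\Omega=(a_1,b_1)\times\cdots\times(a_n,b_n)\subset\mathbb{R}^n$ be a bounded box. There is a constant $C_P(\Omega)$, independent of the admissible mesh size vector $h$, such that $\|u\|_{L^2}\le C_P(\Omega)\|u\|_D$ for all $u\in W_0^{1,2}(\overline{\Omega}_h)$. Moreover $$\frac{1}{\lambda_{1,h}}\le C_P(\Omega)^2\le\frac{1}{4n^2}\sum_{i=1}^n(b_i-a_i)^2,$$ where the lower bound is optimal (for fixed $h$ the smallest admissible constant $C$ satisfies $C^2=1/\lambda_{1,h}$).
   Context: Admissible mesh: $h_i>0$, $a_i=k_ih_i$, $b_i=l_ih_i$, $k_i,l_i\in\mathbb{Z}$, $l_i-k_i>1$; $\mathbb{R}^n_h=\{(h_1z_1,\dots,h_nz_n):z_i\in\mathbb{Z}\}$, $\overline{\Omega}_h=\overline{\Omega}\cap\mathbb{R}^n_h$, $\partial\Omega_h=\partial\Omega\cap\mathbb{R}^n_h$, $\partial_i^+\Omega_h=\partial\Omega_h\cap\{x_i=b_i\}$, $\mathbf{h}=h_1\cdots h_n$, $D_i^+u(x)=(u(x+h_ie_i)-u(x))/h_i$. $\|u\|_{L^2}^2=\sum_{x\in\overline{\Omega}_h}|u(x)|^2\mathbf{h}$, $\|u\|_D^2=\sum_{i=1}^n\sum_{x\in\overline{\Omega}_h\setminus\partial_i^+\Omega_h}|D_i^+u(x)|^2\mathbf{h}$. $W_0^{1,2}(\overline{\Omega}_h)$ is the set of $u:\overline{\Omega}_h\to\mathbb{R}$ with $u=0$ on $\partial\Omega_h$.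 $\lambda_{1,h}=\sum_{i=1}^n\frac{4}{h_i^2}\sin^2\big(\frac{\pi h_i}{2(b_i-a_i)}\big)$ is the first Dirichlet eigenvalue of $-\Delta_h$, $\Delta_hu(x)=\sum_i\frac{u(x+h_ie_i)-2u(x)+u(x-h_ie_i)}{h_i^2}$. *)

From mathcomp Require Import all_boot all_order all_algebra.
From mathcomp Require Import all_classical all_reals all_analysis.
Set Implicit Arguments.
Unset Strict Implicit.
Unset Printing Implicit Defensive.
Import Order.TTheory GRing.Theory Num.Theory.
Local Open Scope ring_scope.

(* Box Omega = prod_i (a_i, b_i); mesh h with a_i = k_i h_i, b_i = l_i h_i.
   Grid points of closure(Omega)_h are x = (h_1 z_1, ..., h_n z_n) with
   z : 'I_n -> int, k_i <= z_i <= l_i. *)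

Definition admissible (R : realType) (n : nat) (a b h : 'I_n -> R)
    (k l : 'I_n -> int) : Prop :=
  forall i : 'I_n, 0 < h i /\ a i = (k i)%:~R * h i /\ b i = (l i)%:~R * h i
                   /\ 1 < l i - k i.

Definition gpt (R : realType) (n : nat) (h : 'I_n -> R) (z : 'I_n -> int)
  : 'rV[R]_n := \row_i (h i * (z i)%:~R).

Definition in_box (n : nat) (k l : 'I_n -> int) (z : 'I_n -> int) : Prop :=
  forall i, k i <= z i <= l i.

Definition on_bdry (n : nat) (k l : 'I_n -> int) (z : 'I_n -> int) : bool :=
  [exists i, (z i == k i) || (z i == l i)].

Definition gbound (n : nat) (k l : 'I_n -> int) : nat :=
  (\max_(i < n) `|l i - k i|)%N.

(* sum of F z over all integer vectors z with k_i <= z_i <= l_i (each once) *)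
Definition gridsum (R : realType) (n : nat) (k l : 'I_n -> int)
    (F : ('I_n -> int) -> R) : R :=
  \sum_(j : {ffun 'I_n -> 'I_(gbound k l).+1}
         | [forall i, k i + Posz (j i) <= l i])
     F (fun i => k i + Posz (j i)).

Definition hprod (R : realType) (n : nat) (h : 'I_n -> R) : R :=
  \prod_(i < n) h i.

Definition Dplus (R : realType) (n : nat) (h : 'I_n -> R) (i : 'I_n)
    (u : 'rV[R]_n -> R) (x : 'rV[R]_n) : R :=
  (u (x + h i *: delta_mx 0 i) - u x) / h i.

Definition W0 (R : realType) (n : nat) (h : 'I_n -> R) (k l : 'I_n -> int)
    (u : 'rV[R]_n -> R) : Prop :=
  forall z, in_box k l z -> on_bdry k l z -> u (gpt h z) = 0.

Definition L2sq (R : realType) (n : nat) (h : 'I_n -> R) (k l : 'I_n -> int)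
    (u : 'rV[R]_n -> R) : R :=
  gridsum k l (fun z => u (gpt h z) ^+ 2 * hprod h).

(* inner sum over closure(Omega)_h minus d_i^+ Omega_h, i.e. z_i <> l_i *)
Definition Dsq (R : realType) (n : nat) (h : 'I_n -> R) (k l : 'I_n -> int)
    (u : 'rV[R]_n -> R) : R :=
  \sum_(i < n) gridsum k l (fun z =>
     if z i != l i then Dplus h i u (gpt h z) ^+ 2 * hprod h else 0).

Definition L2norm (R : realType) (n : nat) (h : 'I_n -> R) (k l : 'I_n -> int)
    (u : 'rV[R]_n -> R) : R := Num.sqrt (L2sq h k l u).

Definition Dnorm (R : realType) (n : nat) (h : 'I_n -> R) (k l : 'I_n -> int)
    (u : 'rV[R]_n -> R) : R := Num.sqrt (Dsq h k l u).

Definition lambda1 (R : realType) (n : nat) (a b h : 'I_n -> R) : R :=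
  \sum_(i < n) 4 / h i ^+ 2 * sin (pi * h i / (2 * (b i - a i))) ^+ 2.

From mathcomp Require Import all_boot all_order all_algebra.
From mathcomp Require Import all_classical all_reals all_analysis.
From mathcomp Require Import zify ring lra.
Import Order.TTheory GRing.Theory Num.Theory.
Local Open Scope ring_scope.
Set Implicit Arguments.
Unset Strict Implicit.
Unset Printing Implicit Defensive.

(* Along direction [i], with [m = l_i - k_i], the positive mode
   [phi t = sin (pi t / m)] vanishes at [0] and [m] and satisfies
   [2 phi t - phi (t - 1) - phi (t + 1) = mu phi t] with
   [mu = 4 sin^2 (pi / 2m)].  Writing [u = phi (u / phi)] and summing by parts
   (a discrete Picone identity) gives
   [sum |D_i^+ u|^2 = mu / h_i^2 * sum u^2 + (a sum of squares)], and summing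
   over [i] yields [|u|_D^2 >= lambda_{1,h} |u|_L2^2].  For the product of the
   modes every square vanishes, so [1 / lambda_{1,h}] is the optimal constant.
   Finally [sin (pi / 2m) >= 1 / m] gives [lambda_{1,h} >= sum 4 / (b_i - a_i)^2],
   and the AM-HM inequality turns this into the mesh-independent bound
   [1 / lambda_{1,h} <= sum (b_i - a_i)^2 / (4 n^2)]. *)

Lemma picone_identity (F : fieldType) (p q x y : F) :
  (p = 0 -> x = 0) -> (q = 0 -> y = 0) ->
  (y - x) ^+ 2 = (p * y - q * x) ^+ 2 / (p * q) + (q - p) * (y ^+ 2 / q - x ^+ 2 / p).
Proof.
move=> px qy; have [p0|p0] := eqVneq p 0.
  rewrite p0 (px p0) !(mul0r, mulr0, subr0, add0r, invr0, expr0n) /=.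
  have [q0|q0] := eqVneq q 0; first by rewrite q0 (qy q0) expr0n mul0r.
  by rewrite mulrCA divff ?mulr1.
have [q0|q0] := eqVneq q 0.
  rewrite q0 (qy q0) !(mul0r, mulr0, subr0, sub0r, add0r, invr0, expr0n) /=.
  by rewrite sqrrN mulrNN mulrCA divff ?mulr1.
by field; apply/andP.
Qed.

Lemma sqr_card_le_sum_mul_sum_inv (R : realFieldType) (I : finType) (x : I -> R) :
  (forall i, 0 < x i) -> #|I|%:R ^+ 2 <= (\sum_i x i) * (\sum_i (x i)^-1).
Proof.
move=> x_gt0; set S := \sum_i \sum_j x i / x j.
have -> : (\sum_i x i) * (\sum_i (x i)^-1) = S.
  by rewrite mulr_suml; apply: eq_bigr => i _; rewrite mulr_sumr.
have pair i j : 2 <= x i / x j + x j / x i.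
  have xi := x_gt0 i; have xj := x_gt0 j.
  have -> : x i / x j + x j / x i = 2 + (x i - x j) ^+ 2 / (x i * x j).
    by field; rewrite !gt_eqF.
  by rewrite lerDl divr_ge0 ?sqr_ge0 // ltW // mulr_gt0.
have : \sum_(i in I) \sum_(j in I) (2 : R) <= S + S.
  rewrite [X in _ <= _ + X]exchange_big -big_split /=.
  by apply: ler_sum => i _; rewrite -big_split; apply: ler_sum => j _; exact: pair.
rewrite !sumr_const -mulrnA -[_ *+ (_ * _)%N]mulr_natr natrM -expr2; lra.
Qed.

Section SineMode.
Variables (R : realType) (m : int).
Hypothesis m_gt0 : 0 < m.

Definition sinmode (t : int) : R := sin (pi * t%:~R / m%:~R).

Definition sinmode_eig : R := 4 * sin (pi / (2 * m%:~R)) ^+ 2.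

Let mR_gt0 : 0 < m%:~R :> R. Proof. by rewrite ltr0z. Qed.

Lemma sinmode0 : sinmode 0 = 0.
Proof. by rewrite /sinmode mulr0 mul0r sin0. Qed.

Lemma sinmode_end : sinmode m = 0.
Proof. by rewrite /sinmode mulfK ?sinpi // gt_eqF. Qed.

Lemma sinmode_gt0 t : 0 < t < m -> 0 < sinmode t.
Proof.
move=> tm; apply: sin_gt0_pi; apply/andP; split.
  by rewrite divr_gt0 // mulr_gt0 ?pi_gt0 // ltr0z; lia.
by rewrite ltr_pdivrMr // ltr_pM2l ?pi_gt0 // ltr_int; lia.
Qed.

Lemma sinmode_ge0 t : 0 <= t <= m -> 0 <= sinmode t.
Proof.
move=> tm; have [->|t0] := eqVneq t 0; first by rewrite sinmode0.
have [->|tm'] := eqVneq t m; first by rewrite sinmode_end.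
by apply/ltW/sinmode_gt0; lia.
Qed.

Lemma sinmode_eq0 t : 0 <= t <= m -> sinmode t = 0 -> t = 0 \/ t = m.
Proof.
move=> tm s0; have [t0|t0] := eqVneq t 0; first by left.
have [tm'|tm'] := eqVneq t m; first by right.
have : 0 < sinmode t by apply: sinmode_gt0; lia.
by rewrite s0 ltxx.
Qed.

Lemma sinmode_second_diff t :
  2 * sinmode t - sinmode (t - 1) - sinmode (t + 1) = sinmode_eig * sinmode t.
Proof.
rewrite /sinmode /sinmode_eig; set a := pi * t%:~R / m%:~R; set c := pi / (2 * m%:~R).
have -> : pi * (t - 1)%:~R / m%:~R = a + - (c + c) :> R.
  by rewrite /a /c intrD /=; field; rewrite gt_eqF.
have -> : pi * (t + 1)%:~R / m%:~R = a + (c + c) :> R.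
  by rewrite /a /c intrD /=; field; rewrite gt_eqF.
have cc : cos c * cos c = 1 - sin c * sin c by have := cos2Dsin2 c; rewrite !expr2; lra.
by rewrite !sinD sinN cosN cosD cc sinD; ring.
Qed.

End SineMode.

Lemma norm_sin_mulrn_le (R : realType) (x : R) (N : nat) :
  `|sin (x *+ N)| <= N%:R * `|sin x|.
Proof.
elim: N => [|N IH]; first by rewrite mulr0n sin0 normr0 mul0r.
rewrite mulrS sinD; apply: le_trans (ler_normD _ _) _; rewrite !normrM -natr1.
have := ler_piMr (normr_ge0 (sin x)) (cos_max (x *+ N)).
have := le_trans (ler_piMl (normr_ge0 (sin (x *+ N))) (cos_max x)) IH.
lra.
Qed.

Lemma sinmode_eig_ge (R : realType) (m : int) : 0 < m ->
  4 / m%:~R ^+ 2 <= sinmode_eig R m.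
Proof.
move=> m0; have mR : 0 < m%:~R :> R by rewrite ltr0z.
pose c : R := pi / (2 * m%:~R).
have m_nat : (`|m|%N%:R : R) = m%:~R by rewrite -[m]gez0_abs ?pmulrn //; lia.
have cm : c *+ `|m|%N = pi / 2.
  by rewrite -[c *+ _]mulr_natr m_nat /c; field; rewrite gt_eqF.
have c_gt0 : 0 < sin c.
  apply: sin_gt0_pi; apply/andP; split; first by rewrite divr_gt0 ?pi_gt0 ?mulr_gt0.
  rewrite /c ltr_pdivrMr ?mulr_gt0 // ltr_pMr ?pi_gt0 //.
  have : 1 <= m%:~R :> R by rewrite ler1z; lia.
  lra.
have := norm_sin_mulrn_le c `|m|%N.
rewrite cm sin_pihalf normr1 gtr0_norm // m_nat => s_ge.
have ms : 1 / m%:~R <= sin c by rewrite ler_pdivrMr // mulrC.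
have -> : 4 / m%:~R ^+ 2 = 4 * (1 / m%:~R) ^+ 2 :> R.
  by rewrite expr_div_n expr1n mul1r.
by rewrite /sinmode_eig -/c ler_pM2l // ler_sqr // nnegrE ?divr_ge0 ?ltW.
Qed.

Section GridSums.
Variables (R : realType) (n : nat) (k l : 'I_n -> int).

Definition shift_at (i : 'I_n) (z : 'I_n -> int) : 'I_n -> int :=
  fun t => if t == i then z t + 1 else z t.

Local Notation g := (gbound k l).
Local Notation grid_pt j := (fun t => k t + Posz (j t)).

Lemma sub_le_gbound i : l i - k i <= g%:Z.
Proof.
apply: le_trans (ler_norm _) _; rewrite -abszE lez_nat.
exact: (@leq_bigmax _ (fun j : 'I_n => `|l j - k j|%N) i).
Qed.

Lemma in_box_grid_pt (j : {ffun 'I_n -> 'I_g.+1}) :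
  [forall t, k t + Posz (j t) <= l t] -> in_box k l (grid_pt j).
Proof. by move=> /forallP jl t; rewrite jl andbT lerDl. Qed.

Lemma gridsum_eq (F G : ('I_n -> int) -> R) :
  (forall z, in_box k l z -> F z = G z) -> gridsum k l F = gridsum k l G.
Proof. by move=> FG; apply: eq_bigr => j /in_box_grid_pt/FG. Qed.

Lemma gridsumD (F G : ('I_n -> int) -> R) :
  gridsum k l (fun z => F z + G z) = gridsum k l F + gridsum k l G.
Proof. exact: big_split. Qed.

Lemma gridsumB (F G : ('I_n -> int) -> R) :
  gridsum k l (fun z => F z - G z) = gridsum k l F - gridsum k l G.
Proof. exact: sumrB. Qed.

Lemma gridsumZ c (F : ('I_n -> int) -> R) :
  gridsum k l (fun z => c * F z) = c * gridsum k l F.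
Proof. by rewrite /gridsum mulr_sumr. Qed.

Lemma gridsum0 : gridsum k l (fun=> 0 : R) = 0.
Proof. exact: big1. Qed.

Lemma gridsum_ge0 (F : ('I_n -> int) -> R) :
  (forall z, in_box k l z -> 0 <= F z) -> 0 <= gridsum k l F.
Proof. by move=> F0; apply: sumr_ge0 => j /in_box_grid_pt/F0. Qed.

Lemma gridsum_ge_term (F : ('I_n -> int) -> R) z :
  (forall z, in_box k l z -> 0 <= F z) -> in_box k l z -> F z <= gridsum k l F.
Proof.
move=> F0 zb; pose j := [ffun t => inord `|z t - k t|%N : 'I_g.+1].
have jE t : Posz (j t) = z t - k t.
  by have := sub_le_gbound t; have := zb t; rewrite ffunE => ? ?; rewrite inordK; lia.
have -> : z = grid_pt j by apply: funext => t; rewrite jE addrC subrK.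
rewrite /gridsum (bigD1 j) /=; last by apply/forallP => t; rewrite jE; have := zb t; lia.
rewrite lerDl; apply: sumr_ge0 => j' /andP[/in_box_grid_pt/F0 //].
Qed.

Definition ffun_succ_at (i : 'I_n) (j : {ffun 'I_n -> 'I_g.+1}) :
  {ffun 'I_n -> 'I_g.+1} := [ffun t => if t == i then ordS (j t) else j t].

Definition ffun_pred_at (i : 'I_n) (j : {ffun 'I_n -> 'I_g.+1}) :
  {ffun 'I_n -> 'I_g.+1} := [ffun t => if t == i then ord_pred (j t) else j t].

Lemma ffun_succ_at_bij i : bijective (ffun_succ_at i).
Proof.
by exists (ffun_pred_at i) => j; apply/ffunP => t; rewrite !ffunE;
  case: eqP => [->|]; rewrite ?eqxx ?(ordSK, ord_predK).
Qed.

Lemma gridsum_shift (i : 'I_n) (F : ('I_n -> int) -> R) :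
  gridsum k l (fun z => if z i != l i then F (shift_at i z) else 0) =
  gridsum k l (fun z => if z i != k i then F z else 0).
Proof.
rewrite /gridsum -!big_mkcondr [RHS](reindex (ffun_succ_at i)) /=; last first.
  exact: onW_bij (ffun_succ_at_bij i).
have gi := sub_le_gbound i.
have succE (j : {ffun 'I_n -> 'I_g.+1}) t : (j i < g)%N ->
    k t + ffun_succ_at i j t = shift_at i (grid_pt j) t.
  move=> ji; rewrite /ffun_succ_at ffunE /shift_at.
  by case: ifP => [/eqP ->|_] //=; rewrite modn_small //; lia.
apply: eq_big => j; last first.
  move=> /andP[/forallP jl ne]; congr F; apply: funext => t.
  by rewrite succE //; have := jl i; move: ne gi; lia.
have [ji|ji] := ltnP (j i) g.
  apply/andP/andP => -[/forallP jl ne]; split.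
  - apply/forallP => t; rewrite succE // /shift_at; have := jl t.
    by case: ifP => [/eqP ->|_]; lia.
  - by rewrite succE // /shift_at eqxx; lia.
  - apply/forallP => t; have := jl t; rewrite succE // /shift_at.
    by case: ifP => [/eqP ->|_]; lia.
  - by have := jl i; rewrite succE // /shift_at eqxx; lia.
(* [ordS] wraps the slice [j i = g] around to [0]; it lies on the face
   [z_i = l_i] and its image on [z_i = k_i], so both sides exclude it. *)
have jg : (j i : nat) = g by apply/eqP; rewrite eqn_leq ji -ltnS ltn_ord.
rewrite /ffun_succ_at ffunE eqxx /= jg modnn addr0 eqxx andbF.
apply/negbTE/negP => /andP[/forallP jl].
by have := jl i; move: gi; rewrite jg; lia.
Qed.

Lemma gridsum_by_parts (i : 'I_n) (f : int -> R) (G : ('I_n -> int) -> R) :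
  (forall z, z i = k i -> G z = 0) -> (forall z, z i = l i -> G z = 0) ->
  gridsum k l (fun z => if z i != l i then f (z i) * (G (shift_at i z) - G z) else 0)
  = gridsum k l (fun z => (f (z i - 1) - f (z i)) * G z).
Proof.
move=> Gk Gl; transitivity (gridsum k l (fun z =>
    (if z i != l i then f (z i) * G (shift_at i z) else 0)
    - (if z i != l i then f (z i) * G z else 0))).
  by apply: gridsum_eq => z _; case: ifP; rewrite ?mulrBr ?subr0.
under [RHS]gridsum_eq => z _ do rewrite mulrBl.
rewrite !gridsumB; congr (_ - _).
  transitivity (gridsum k l (fun z =>
      if z i != l i then (fun w => f (w i - 1) * G w) (shift_at i z) else 0)).
    by apply: gridsum_eq => z _; rewrite /shift_at eqxx addrK.
  rewrite (gridsum_shift i (fun w => f (w i - 1) * G w)); apply: gridsum_eq => z _.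
  by case: ifP => // /negbFE/eqP/Gk ->; rewrite mulr0.
apply: gridsum_eq => z _.
by case: ifP => // /negbFE/eqP/Gl ->; rewrite mulr0.
Qed.
End GridSums.

Section Direction.
Variables (R : realType) (n : nat) (h : 'I_n -> R) (k l : 'I_n -> int).
Variables (u : 'rV[R]_n -> R) (i : 'I_n).
Hypothesis kl : 0 < l i - k i.
Hypothesis u0 : W0 h k l u.

Local Notation v z := (u (gpt h z)).
Local Notation phi z := (sinmode R (l i - k i) (z i - k i)).

Lemma shift_at_id z : shift_at i z i = z i + 1.
Proof. by rewrite /shift_at eqxx. Qed.

Lemma in_box_shift_at z : in_box k l z -> z i != l i -> in_box k l (shift_at i z).
Proof.
move=> zb zl t; rewrite /shift_at; case: ifP => [/eqP ->|_]; last exact: zb.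
by have := zb i; move: zl; lia.
Qed.

Lemma W0_sinmode_eq0 z : in_box k l z -> phi z = 0 -> v z = 0.
Proof.
move=> zb phi0; have zi := zb i; apply: u0 => //; apply/existsP; exists i.
have [zk|zl] : z i - k i = 0 \/ z i - k i = l i - k i.
  by apply: (@sinmode_eq0 R) => //; lia.
- by apply/orP; left; apply/eqP; lia.
- by apply/orP; right; apply/eqP; lia.
Qed.

Definition picone_rem z : R :=
  (phi z * v (shift_at i z) - phi (shift_at i z) * v z) ^+ 2
  / (phi z * phi (shift_at i z)).

Lemma picone_rem_ge0 z : in_box k l z -> z i != l i -> 0 <= picone_rem z.
Proof.
move=> zb zl; rewrite /picone_rem divr_ge0 ?sqr_ge0 // shift_at_id.
by have zi := zb i; rewrite mulr_ge0 // sinmode_ge0 //; lia.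
Qed.

Lemma ground_state_sum :
  gridsum k l (fun z => if z i != l i then (v (shift_at i z) - v z) ^+ 2 else 0) =
  gridsum k l (fun z => if z i != l i then picone_rem z else 0)
  + sinmode_eig R (l i - k i) * gridsum k l (fun z => v z ^+ 2).
Proof.
pose G z := v z ^+ 2 / phi z.
pose f s := sinmode R (l i - k i) (s - k i + 1) - sinmode R (l i - k i) (s - k i).
transitivity (gridsum k l (fun z => (if z i != l i then picone_rem z else 0)
    + (if z i != l i then f (z i) * (G (shift_at i z) - G z) else 0))).
  apply: gridsum_eq => z zb; case: ifP => zl; rewrite ?addr0 //.
  rewrite (@picone_identity _ (phi z) (phi (shift_at i z)) (v z) (v (shift_at i z))).
  - by rewrite /picone_rem /G /f shift_at_id addrAC.
  - exact: W0_sinmode_eq0.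
  - exact/W0_sinmode_eq0/in_box_shift_at.
rewrite gridsumD gridsum_by_parts; last 2 first.
- by move=> z zk; rewrite /G zk subrr sinmode0 invr0 mulr0.
- by move=> z zl; rewrite /G zl sinmode_end // invr0 mulr0.
rewrite -gridsumZ; congr (_ + _); apply: gridsum_eq => z zb.
have -> : f (z i - 1) - f (z i) = sinmode_eig R (l i - k i) * phi z.
  by rewrite -sinmode_second_diff // /f [z i - 1 - k i]addrAC subrK; lra.
have [phi0|phi0] := eqVneq (phi z) 0.
  by rewrite /G phi0 (W0_sinmode_eq0 zb phi0) expr0n /= !(mulr0, mul0r).
by rewrite /G; field.
Qed.

End Direction.

Lemma gpt_shift_at (R : realType) (n : nat) (h : 'I_n -> R) i z :
  gpt h (shift_at i z) = gpt h z + h i *: delta_mx 0 i.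
Proof.
apply/rowP => t; rewrite !mxE /shift_at eqxx /=.
by case: ifP => [/eqP ->|_] /=; rewrite ?intrD ?mulrDr ?mulr0 ?addr0.
Qed.

Definition sin_eigenfun (R : realType) (n : nat) (h : 'I_n -> R) (k l : 'I_n -> int)
  : 'rV[R]_n -> R :=
  fun x => \prod_i sin (pi * (x 0 i / h i - (k i)%:~R) / (l i - k i)%:~R).

Section AdmissibleMesh.
Variables (R : realType) (n : nat) (a b h : 'I_n -> R) (k l : 'I_n -> int).
Hypothesis adm : admissible a b h k l.

Let mesh_gt0 i : 0 < h i. Proof. by have [] := adm i. Qed.
Let width_gt1 i : 1 < l i - k i. Proof. by have [_ [_ []]] := adm i. Qed.
Let width_gt0 i : 0 < l i - k i. Proof. by have := width_gt1 i; lia. Qed.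

Lemma box_width i : b i - a i = (l i - k i)%:~R * h i.
Proof. by have [_ [-> [-> _]]] := adm i; rewrite intrB mulrBl. Qed.

Lemma box_width_gt0 i : 0 < b i - a i.
Proof. by rewrite box_width mulr_gt0 // ltr0z. Qed.

Lemma lambda1_summand i :
  4 / h i ^+ 2 * sin (pi * h i / (2 * (b i - a i))) ^+ 2
  = sinmode_eig R (l i - k i) / h i ^+ 2.
Proof.
have m0 : (l i - k i)%:~R != 0 :> R by rewrite gt_eqF // ltr0z.
rewrite box_width /sinmode_eig.
have -> : pi * h i / (2 * ((l i - k i)%:~R * h i)) = pi / (2 * (l i - k i)%:~R).
  by field; rewrite -intrB m0 gt_eqF.
by field; rewrite gt_eqF.
Qed.

Lemma lambda1_ge : \sum_i 4 / (b i - a i) ^+ 2 <= lambda1 a b h.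
Proof.
apply: ler_sum => i _; rewrite lambda1_summand box_width exprMn.
rewrite invfM mulrA ler_pM2r ?invr_gt0 ?exprn_gt0 //.
exact: sinmode_eig_ge.
Qed.

Lemma lambda1_gt0 : (0 < n)%N -> 0 < lambda1 a b h.
Proof.
move=> n0; apply: lt_le_trans lambda1_ge.
rewrite (bigD1 (Ordinal n0)) //= ltr_pwDl ?divr_gt0 ?exprn_gt0 ?box_width_gt0 //.
by apply: sumr_ge0 => i _; rewrite divr_ge0 ?sqr_ge0.
Qed.

Lemma L2sq_gridsum u :
  L2sq h k l u = hprod h * gridsum k l (fun z => u (gpt h z) ^+ 2).
Proof. by rewrite -gridsumZ; apply: gridsum_eq => z _; rewrite mulrC. Qed.

Lemma Dsq_decomp u : W0 h k l u ->
  Dsq h k l u = \sum_i hprod h / h i ^+ 2 *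
      gridsum k l (fun z => if z i != l i then picone_rem h k l u i z else 0)
    + lambda1 a b h * L2sq h k l u.
Proof.
move=> u0; rewrite /Dsq /lambda1 L2sq_gridsum mulr_suml -big_split.
apply: eq_bigr => i _; rewrite lambda1_summand.
transitivity (hprod h / h i ^+ 2 * gridsum k l (fun z =>
    if z i != l i then (u (gpt h (shift_at i z)) - u (gpt h z)) ^+ 2 else 0)).
  rewrite -gridsumZ; apply: gridsum_eq => z _; case: ifP; rewrite ?mulr0 //.
  by rewrite /Dplus -gpt_shift_at => _; field; rewrite gt_eqF.
by rewrite ground_state_sum //=; ring.
Qed.

Lemma lambda1_L2sq_le_Dsq u :
  W0 h k l u -> lambda1 a b h * L2sq h k l u <= Dsq h k l u.
Proof.
move=> u0; rewrite Dsq_decomp // lerDr; apply: sumr_ge0 => i _.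
apply: mulr_ge0; first by rewrite divr_ge0 ?sqr_ge0 // ltW // prodr_gt0.
by apply: gridsum_ge0 => z zb; case: ifP => // zl; apply: picone_rem_ge0.
Qed.

Local Notation ustar := (sin_eigenfun h k l).

Lemma sin_eigenfun_gpt z :
  ustar (gpt h z) = \prod_i sinmode R (l i - k i) (z i - k i).
Proof.
apply: eq_bigr => i _; rewrite /sinmode mxE [h i * _]mulrC mulfK ?gt_eqF //.
by rewrite !intrB.
Qed.

Lemma W0_sin_eigenfun : W0 h k l ustar.
Proof.
move=> z _ /existsP[i /orP[] /eqP zi]; rewrite sin_eigenfun_gpt (bigD1 i) //= zi.
  by rewrite subrr sinmode0 mul0r.
by rewrite sinmode_end ?mul0r.
Qed.

(* [ustar] separates variables, so along each direction it is a multiple of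
   the one-dimensional mode and the Picone remainder vanishes. *)
Lemma picone_rem_sin_eigenfun i z : picone_rem h k l ustar i z = 0.
Proof.
rewrite /picone_rem !sin_eigenfun_gpt.
rewrite [\prod_j _ (shift_at i z j - _)](bigD1 i) // [\prod_j _ (z j - _)](bigD1 i) //=.
under [\prod_(j | j != i) _ (shift_at i z j - _)]eq_bigr => j ji
  do rewrite /shift_at (negbTE ji).
by rewrite shift_at_id mulrCA subrr expr0n mul0r.
Qed.

Lemma Dsq_sin_eigenfun : Dsq h k l ustar = lambda1 a b h * L2sq h k l ustar.
Proof.
rewrite (Dsq_decomp W0_sin_eigenfun) big1 ?add0r // => i _.
rewrite (@gridsum_eq R n k l _ (fun=> 0)) ?gridsum0 ?mulr0 // => z _.
by case: ifP; rewrite ?picone_rem_sin_eigenfun.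
Qed.

Lemma L2sq_sin_eigenfun_gt0 : 0 < L2sq h k l ustar.
Proof.
rewrite L2sq_gridsum mulr_gt0 ?prodr_gt0 //.
pose z1 t := k t + 1.
have z1b : in_box k l z1 by move=> t; have := width_gt1 t; rewrite /z1; lia.
apply: lt_le_trans (gridsum_ge_term _ z1b); last by move=> z _; apply: sqr_ge0.
rewrite sin_eigenfun_gpt exprn_gt0 // prodr_gt0 // => i _.
by rewrite sinmode_gt0 // /z1 addrAC subrr add0r; have := width_gt1 i; lia.
Qed.

Lemma discrete_poincare u : (0 < n)%N -> W0 h k l u ->
  L2norm h k l u <= Num.sqrt (1 / lambda1 a b h) * Dnorm h k l u.
Proof.
move=> n0 u0; have lam_gt0 := lambda1_gt0 n0.
rewrite /L2norm /Dnorm -sqrtrM; last by rewrite divr_ge0 // ltW.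
apply: ler_wsqrtr.
by rewrite mul1r mulrC ler_pdivlMr // mulrC lambda1_L2sq_le_Dsq.
Qed.

Lemma poincare_const_optimal C : (0 < n)%N ->
  (forall u, W0 h k l u -> L2norm h k l u <= C * Dnorm h k l u) ->
  1 / lambda1 a b h <= C ^+ 2.
Proof.
move=> n0 /(_ _ W0_sin_eigenfun); have lam_gt0 := lambda1_gt0 n0.
rewrite /L2norm /Dnorm Dsq_sin_eigenfun sqrtrM; last exact: ltW.
have s_gt0 : 0 < Num.sqrt (L2sq h k l ustar).
  by rewrite sqrtr_gt0 L2sq_sin_eigenfun_gt0.
set s := Num.sqrt (L2sq h k l ustar); set q := Num.sqrt (lambda1 a b h).
rewrite mulrA -{1}[s]mul1r ler_pM2r // => Cq_ge1.
rewrite ler_pdivrMr // -(sqr_sqrtr (ltW lam_gt0)) -/q -exprMn.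
by rewrite -[1](expr1n _ 2) ler_sqr ?nnegrE // (le_trans ler01).
Qed.

Lemma inv_lambda1_le : (0 < n)%N ->
  1 / lambda1 a b h <= 1 / (4 * n%:R ^+ 2) * \sum_i (b i - a i) ^+ 2.
Proof.
move=> n0; have lam_gt0 := lambda1_gt0 n0.
have w_gt0 i : 0 < (b i - a i) ^+ 2 by rewrite exprn_gt0 // box_width_gt0.
have := sqr_card_le_sum_mul_sum_inv w_gt0; rewrite card_ord.
have := lambda1_ge; rewrite -mulr_sumr.
set P := \sum_i (b i - a i) ^+ 2; set Q := \sum_i ((b i - a i) ^+ 2)^-1.
move=> lam_ge nPQ.
have Q_gt0 : 0 < Q.
  rewrite /Q (bigD1 (Ordinal n0)) //= ltr_pwDl ?invr_gt0 //.
  by apply: sumr_ge0 => i _; rewrite invr_ge0 ltW.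
have n2_gt0 : 0 < n%:R ^+ 2 :> R by rewrite exprn_gt0 // ltr0n.
apply: (@le_trans _ _ (1 / (4 * Q))).
  by rewrite !mul1r lef_pV2 ?posrE ?mulr_gt0.
rewrite -(@ler_pM2r _ (4 * Q)) ?mulr_gt0 // divfK ?gt_eqF ?mulr_gt0 //.
have -> : 1 / (4 * n%:R ^+ 2) * P * (4 * Q) = P * Q / n%:R ^+ 2.
  by field; rewrite pnatr_eq0 -lt0n.
by rewrite ler_pdivlMr // mul1r.
Qed.

End AdmissibleMesh.

Theorem mainTheorem5 (R : realType) (n : nat) (a b : 'I_n -> R) :
  (0 < n)%N -> (forall i, a i < b i) ->
  exists CP : R, 0 <= CP /\
    (forall (h : 'I_n -> R) (k l : 'I_n -> int), admissible a b h k l ->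
       forall u : 'rV[R]_n -> R, W0 h k l u ->
         L2norm h k l u <= CP * Dnorm h k l u) /\
    (forall (h : 'I_n -> R) (k l : 'I_n -> int), admissible a b h k l ->
       1 / lambda1 a b h <= CP ^+ 2) /\
    CP ^+ 2 <= 1 / (4 * n%:R ^+ 2) * \sum_(i < n) (b i - a i) ^+ 2 /\
    (forall (h : 'I_n -> R) (k l : 'I_n -> int), admissible a b h k l ->
       (forall u : 'rV[R]_n -> R, W0 h k l u ->
          L2norm h k l u <= Num.sqrt (1 / lambda1 a b h) * Dnorm h k l u) /\
       (forall C : R, (forall u : 'rV[R]_n -> R, W0 h k l u ->
          L2norm h k l u <= C * Dnorm h k l u) ->
        1 / lambda1 a b h <= C ^+ 2)).
Proof.
(* [a < b] is implied by the admissibility of any mesh. *)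
move=> n0 _; set bound := 1 / (4 * n%:R ^+ 2) * \sum_(i < n) (b i - a i) ^+ 2.
have bound_ge0 : 0 <= bound.
  by rewrite mulr_ge0 ?divr_ge0 ?mulr_ge0 ?sqr_ge0 ?sumr_ge0 // => i _; apply: sqr_ge0.
exists (Num.sqrt bound); rewrite sqr_sqrtr //; split; first exact: sqrtr_ge0.
split.
  move=> h k l adm u u0; apply: le_trans (discrete_poincare adm n0 u0) _.
  by rewrite ler_wpM2r ?sqrtr_ge0 // ler_wsqrtr // (inv_lambda1_le adm n0).
split; first by move=> h k l adm; apply: inv_lambda1_le adm n0.
split=> // h k l adm; split=> [u u0|C]; first exact: discrete_poincare.
exact: poincare_const_optimal.
Qed.
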